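(* Let $R$ be a commutative unital ring such that every proper quotient of $R/\operatorname{Jac}(R)$ has Bass stable rank $1$, where $\operatorname{Jac}(R)$ denotes the Jacobson radical of $R$ (the intersection of all maximal ideals of $R$). Then $\operatorname{sr}(R) \le 2$.
   Context: Rings are commutative and unital. A row $(r_1,\dots,r_n)\in R^n$ is unimodular if $\sum_i R r_i = R$; $\operatorname{Um}_n(R)$ denotes the set of unimodular rows of size $n$. A row $(r_1,\dots,r_{n+1})\in\operatorname{Um}_{n+1}(R)$ ($n>0$) is stable if there are $s_1,\dots,s_n\in R$ with $(r_1+s_1r_{n+1},\dots,r_n+s_nr_{n+1})\in\operatorname{Um}_n(R)$. An integer $n>0$ lies in the stable range of $R$ if every row in $\operatorname{Um}_{n+1}(R)$ is stable, and the Bass stable rank $\operatorname{sr}(R)$ is the least integer in the stable range of $R$. *)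

From mathcomp Require Import all_boot all_algebra.
Set Implicit Arguments. Unset Strict Implicit. Unset Printing Implicit Defensive.
Import GRing.Theory.
Local Open Scope ring_scope.

Section Defs.
Variable R : comPzRingType.

Definition is_ideal (I : R -> Prop) : Prop :=
  [/\ I 0, (forall x y, I x -> I y -> I (x + y)) & (forall a x, I x -> I (a * x))].

Definition is_maximal_ideal (M : R -> Prop) : Prop :=
  [/\ is_ideal M, ~ M 1 &
      forall J, is_ideal J -> (forall x, M x -> J x) -> J 1 \/ (forall x, J x -> M x)].

Definition Jac (x : R) : Prop := forall M, is_maximal_ideal M -> M x.

Definition unimodular (n : nat) (r : 'I_n -> R) : Prop :=
  exists c : 'I_n -> R, \sum_(i < n) c i * r i = 1.

Definition stable_row (n : nat) (r : 'I_n.+1 -> R) : Prop :=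
  exists s : 'I_n -> R, unimodular (fun i : 'I_n => r (widen_ord (leqnSn n) i) + s i * r ord_max).

Definition in_stable_range (n : nat) : Prop :=
  (0 < n)%N /\ forall r : 'I_n.+1 -> R, unimodular r -> stable_row r.

Definition sr_le (m : nat) : Prop := exists n, (n <= m)%N /\ in_stable_range n.

(* The same notions for the quotient ring R/I, written via representatives in R:
   the image of r in (R/I)^n is unimodular iff sum c_i r_i - 1 lies in I. *)
Definition unimodular_mod (I : R -> Prop) (n : nat) (r : 'I_n -> R) : Prop :=
  exists c : 'I_n -> R, I (\sum_(i < n) c i * r i - 1).

Definition stable_row_mod (I : R -> Prop) (n : nat) (r : 'I_n.+1 -> R) : Prop :=
  exists s : 'I_n -> R,
    unimodular_mod I (fun i : 'I_n => r (widen_ord (leqnSn n) i) + s i * r ord_max).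

Definition in_stable_range_mod (I : R -> Prop) (n : nat) : Prop :=
  (0 < n)%N /\ forall r : 'I_n.+1 -> R, unimodular_mod I r -> stable_row_mod I r.

(* sr(R/I) = 1 : 1 lies in the stable range of R/I (1 is then the least one). *)
Definition sr_quot_eq1 (I : R -> Prop) : Prop := in_stable_range_mod I 1.

End Defs.

From mathcomp Require Import all_boot all_algebra.
From mathcomp Require Import ring.
From mathcomp Require Import boolp classical_sets.
Import GRing.Theory.

Set Implicit Arguments.
Unset Strict Implicit.
Unset Printing Implicit Defensive.

(* Let (a, b, c) be unimodular.  If a is not in Jac(R), then R/(Ra + Jac(R))
   is a proper quotient of R/Jac(R), so it has stable rank 1 and some
   b + s c is unimodular modulo Ra + Jac(R); hence a, b + s c generate R up to
   an element of 1 + Jac(R), which is a unit.  The case b not in Jac(R) is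
   symmetric.  If a, b are both in Jac(R), then c is a unit and a + s c = 1
   for s = c^-1 (1 - a). *)

Local Open Scope classical_set_scope.
Local Open Scope ring_scope.

Section Krull.
Variable R : comPzRingType.

Lemma maximal_ideal_exists (K : set R) : is_ideal K -> ~ K 1 ->
  exists M, is_maximal_ideal M /\ K `<=` M.
Proof.
move=> idK K1; pose proper_above A := [/\ is_ideal A, ~ A 1 & K `<=` A].
(* Zorn_bigcup also sees the empty chain, whose union is empty. *)
have [A [PA Amax]] : exists A, (A = set0 \/ proper_above A) /\
    forall B, A `<` B -> ~ (B = set0 \/ proper_above B).
  apply: Zorn_bigcup => F FP Ftot.
  have [[X0 FX0 [x0 X0x0]]|Fempty] := pselect (exists2 X, F X & X !=set0).
    right; have props X x : F X -> X x -> proper_above X.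
      by move=> FX Xx; case: (FP X FX) => // Xempty; move: Xx; rewrite Xempty.
    have [_ _ KX0] := props X0 x0 FX0 X0x0.
    split; [split|..].
    - by exists X0 => //; apply: KX0; case: idK.
    - move=> x y [X FX Xx] [Y FY Yy].
      have [XY|YX] := Ftot X Y FX FY.
      + have [[_ YD _] _ _] := props Y y FY Yy.
        by exists Y => //; apply: YD => //; apply: XY.
      + have [[_ XD _] _ _] := props X x FX Xx.
        by exists X => //; apply: XD => //; apply: YX.
    - move=> a x [X FX Xx]; exists X => //.
      by have [[_ _ XM] _ _] := props X x FX Xx; apply: XM.
    - by move=> [X FX X1]; have [_ nX1 _] := props X 1 FX X1.
    - by move=> x Kx; exists X0 => //; apply: KX0.
  left; apply/seteqP; split=> // x [X FX Xx].
  by exfalso; apply: Fempty; exists X => //; exists x.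
have [idA A1 KA] : proper_above A.
  case: PA => // A0; exfalso; apply: (Amax K); last by right; split.
  by rewrite A0; split; [exact: sub0set | case: idK => K0 _ _ /(_ 0 K0)].
exists A; split=> //; split=> // J idJ AJ.
have [J1|nJ1] := pselect (J 1); first by left.
have [JA|nJA] := pselect (J `<=` A); first by right.
by exfalso; apply: (Amax J); [split | right; split=> // x /KA /AJ].
Qed.

End Krull.

Section Jacobson.
Variable R : comPzRingType.

Lemma Jac_ideal : is_ideal (@Jac R).
Proof.
split=> [M [[]] //|x y Jx Jy M maxM|a x Jx M maxM].
- by case: (maxM) => [[_ MD _] _ _]; apply: MD; [apply: Jx | apply: Jy].
- by case: (maxM) => [[_ _ MM] _ _]; apply: MM; apply: Jx.
Qed.

Lemma Jac_sub1_invertible (t : R) : Jac (t - 1) -> exists u, u * t = 1.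
Proof.
move=> Jt; pose K := fun x : R => exists r, x = r * t.
have [[u u1]|nK1] := pselect (K 1); first by exists u.
have idK : is_ideal K.
  split; first by exists 0; rewrite mul0r.
    by move=> _ _ [r ->] [s ->]; exists (r + s); rewrite mulrDl.
  by move=> a _ [r ->]; exists (a * r); rewrite mulrA.
have [M [maxM KM]] := maximal_ideal_exists idK nK1.
have [[_ MD MM] M1 _] := maxM.
have Mt : M t by apply: KM; exists 1; rewrite mul1r.
have M1t : M (- 1 * (t - 1)) by apply: MM; exact: Jt.
case: M1; have -> : 1 = t + - 1 * (t - 1) by ring.
exact: MD.
Qed.

Lemma unimodular2_modJac (x y p q : R) : Jac (p * x + q * y - 1) ->
  exists p' q', p' * x + q' * y = 1.
Proof.
move=> /Jac_sub1_invertible [u u1].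
by exists (u * p), (u * q); rewrite -u1; ring.
Qed.

Definition Jac_plus_span (a : R) : set R := fun t => exists r, Jac (t - r * a).

Lemma Jac_plus_span_ideal (a : R) : is_ideal (Jac_plus_span a).
Proof.
have [J0 JD JM] := @Jac_ideal.
split; first by exists 0; rewrite mul0r subr0.
  move=> u v [r Jr] [s Js]; exists (r + s).
  have -> : u + v - (r + s) * a = (u - r * a) + (v - s * a) by ring.
  exact: JD.
move=> e u [r Jr]; exists (e * r).
have -> : e * u - e * r * a = e * (u - r * a) by ring.
exact: JM.
Qed.

Lemma sr1_mod_pair (I : set R) (b c : R) : sr_quot_eq1 I ->
  (exists y z, I (y * b + z * c - 1)) -> exists s d, I (d * (b + s * c) - 1).
Proof.
move=> [_ sr1] [y [z Iyz]].
have [|s [d]] := sr1 (fun i : 'I_2 => if val i == 0%N then b else c).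
  exists (fun i : 'I_2 => if val i == 0%N then y else z).
  by rewrite !big_ord_recl big_ord0 addr0.
by rewrite big_ord1; exists (s ord0), (d ord0).
Qed.

End Jacobson.

Section StableRangeTwo.
Variable R : comPzRingType.
Hypothesis sr_proper_quotients : forall I : set R, is_ideal I ->
  (forall x, Jac x -> I x) -> (exists x, I x /\ ~ Jac x) -> sr_quot_eq1 I.

Lemma stable_triple_nonJac (a b c x y z : R) : ~ Jac a ->
  x * a + y * b + z * c = 1 -> exists s p q, p * a + q * (b + s * c) = 1.
Proof.
move=> nJa E; have [J0 _ _] := @Jac_ideal R.
have sr1 : sr_quot_eq1 (Jac_plus_span a).
  apply: sr_proper_quotients; first exact: Jac_plus_span_ideal.
    by move=> t Jt; exists 0; rewrite mul0r subr0.
  by exists a; split=> //; exists 1; rewrite mul1r subrr.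
have [|s [d [r Jr]]] := sr1_mod_pair (b := b) (c := c) sr1.
  exists y, z, (- x).
  have -> : y * b + z * c - 1 - - x * a = x * a + y * b + z * c - 1 by ring.
  by rewrite E subrr.
exists s; apply: (unimodular2_modJac (p := - r) (q := d)).
by have <- : d * (b + s * c) - 1 - r * a = - r * a + d * (b + s * c) - 1 by ring.
Qed.

Lemma stable_triple_Jac (a b c x y z : R) : Jac a -> Jac b ->
  x * a + y * b + z * c = 1 -> exists s, a + s * c = 1.
Proof.
move=> Ja Jb E; have [_ JD JM] := @Jac_ideal R.
have [|u uzc] := @Jac_sub1_invertible R (z * c).
  have -> : z * c - 1 = - x * a + - y * b by rewrite -E; ring.
  by apply: JD; apply: JM.
exists (u * z * (1 - a)).
have -> : u * z * (1 - a) * c = (1 - a) * (u * (z * c)) by ring.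
by rewrite uzc mulr1 addrC subrK.
Qed.

Lemma stable_triple (a b c x y z : R) : x * a + y * b + z * c = 1 ->
  exists s1 s2 p q, p * (a + s1 * c) + q * (b + s2 * c) = 1.
Proof.
move=> E.
have [Ja|nJa] := pselect (Jac a); last first.
  have [s [p [q Epq]]] := stable_triple_nonJac nJa E.
  by exists 0, s, p, q; rewrite mul0r addr0.
have [Jb|nJb] := pselect (Jac b); last first.
  have E' : y * b + x * a + z * c = 1 by rewrite -E; ring.
  have [s [p [q Epq]]] := stable_triple_nonJac nJb E'.
  by exists s, 0, q, p; rewrite mul0r addr0 -Epq; ring.
have [s Es] := stable_triple_Jac Ja Jb E.
by exists s, 0, 1, 0; rewrite Es; ring.
Qed.

End StableRangeTwo.

Theorem mainTheorem5 (R : comPzRingType) :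
  (forall I : R -> Prop, is_ideal I ->
     (forall x, Jac x -> I x) -> (exists x, I x /\ ~ Jac x) ->
     sr_quot_eq1 I) ->
  sr_le R 2.
Proof.
move=> sr_quot; exists 2%N; split=> //; split=> // r [c Ec].
have e0 : widen_ord (leqnSn 2) ord0 = ord0 :> 'I_3 by apply: val_inj.
have e1 : widen_ord (leqnSn 2) (lift ord0 ord0) = lift ord0 ord0 :> 'I_3 by apply: val_inj.
have e2 : lift ord0 (lift ord0 ord0) = ord_max :> 'I_3 by apply: val_inj.
rewrite !big_ord_recl big_ord0 e2 addr0 addrA in Ec.
have [s1 [s2 [p [q Epq]]]] := stable_triple sr_quot Ec.
exists (fun i : 'I_2 => if val i == 0%N then s1 else s2).
exists (fun i : 'I_2 => if val i == 0%N then p else q).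
by rewrite !big_ord_recl big_ord0 /= e0 e1 addr0.
Qed.
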